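(* Let $G$ be a graph of order $n\ge2$ with no isolated vertices. Then $n-\gamma_2(G)\le\operatorname{ZIR}(G)\le n-\gamma(G)$, and both bounds are sharp.
   Context: $\gamma(G)$ is the domination number (minimum size of a set $D$ with every vertex in $D$ or adjacent to a vertex of $D$). A 2-dominating set is a set $D$ such that every vertex not in $D$ is adjacent to at least two vertices of $D$; $\gamma_2(G)$ is the minimum size of a 2-dominating set. A nonempty $F\subseteq V(G)$ is a fort if every $v\notin F$ has $|N(v)\cap F|\ne1$. A private fort of $x\in S$ relative to $S$ is a fort $F$ with $S\cap F=\{x\}$; $S$ is a ZIr-set if every element of $S$ has a private fort. $\operatorname{ZIR}(G)$ is the maximum cardinality of an inclusion-maximal ZIr-set. *)

From mathcomp Require Import all_boot.
Set Implicit Arguments. Unset Strict Implicit. Unset Printing Implicit Defensive.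

(* A finite simple graph: vertex type T : finType, adjacency e : rel T,
   assumed symmetric and irreflexive (as hypotheses of the theorem). *)

Section Graph.
Variables (T : finType) (e : rel T).

Definition nbh (v : T) : {set T} := [set u | e v u].

Definition simple_graph : Prop := symmetric e /\ irreflexive e.

Definition no_isolated : Prop := forall v : T, exists u : T, e v u.

Definition dominating (D : {set T}) : bool :=
  [forall v, (v \in D) || [exists u in D, e v u]].

Definition two_dominating (D : {set T}) : bool :=
  [forall v, (v \notin D) ==> (2 <= #|nbh v :&: D|)].

(* minimum cardinality (setT is always admissible, so #|T| is a safe default) *)
Definition domination_number : nat :=
  \big[minn/#|T|]_(D : {set T} | dominating D) #|D|.

Definition two_domination_number : nat :=
  \big[minn/#|T|]_(D : {set T} | two_dominating D) #|D|.

Definition fort (F : {set T}) : bool :=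
  (F != set0) && [forall v, (v \notin F) ==> (#|nbh v :&: F| != 1)].

Definition private_fort (S : {set T}) (x : T) (F : {set T}) : bool :=
  fort F && (S :&: F == [set x]).

Definition ZIr_set (S : {set T}) : bool :=
  [forall x in S, exists F, private_fort S x F].

Definition ZIR : nat := \max_(S : {set T} | maxset ZIr_set S) #|S|.

End Graph.

From mathcomp Require Import all_boot order.
Set Implicit Arguments. Unset Strict Implicit. Unset Printing Implicit Defensive.
Import Order.TTheory.

(* If S is a ZIr-set, its complement dominates: a vertex x of S has a
   neighbour u; if u is in S, the private fort F of u misses x, so the fort
   condition at x forces a second neighbour w of x in F, and w lies outside S
   because S meets F only in u.  Conversely, if D is 2-dominating, every x
   outside D has the private fort x |: D with respect to ~: D.  Hence
   n - gamma_2 <= ZIR <= n - gamma; on the 4-cycle gamma = gamma_2 = 2, so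
   both bounds are attained. *)

Section Bounds.
Variables (T : finType) (e : rel T).

Lemma domination_number_le D : dominating e D -> domination_number e <= #|D|.
Proof. exact: (@bigmin_le_cond _ nat _ _ D). Qed.

Lemma domination_number_ge k :
  k <= #|T| -> (forall D, dominating e D -> k <= #|D|) -> k <= domination_number e.
Proof. by move=> k_le_n k_le_dom; apply/(@bigmin_geP _ nat). Qed.

Lemma two_domination_number_le D :
  two_dominating e D -> two_domination_number e <= #|D|.
Proof. exact: (@bigmin_le_cond _ nat _ _ D). Qed.

Lemma two_dominating_setT : two_dominating e [set: T].
Proof. by apply/forallP => v; rewrite inE. Qed.

Lemma two_domination_number_attained :
  exists2 D, two_dominating e D & #|D| = two_domination_number e.
Proof.
have [D domD min_D] := @eq_bigmin _ nat _ #|T| _ _ (fun D : {set T} => #|D|)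
  two_dominating_setT (fun D _ => max_card (mem D)).
by exists D.
Qed.

Lemma private_fort_mem S x F y :
  private_fort e S x F -> y \in S -> y \in F -> y = x.
Proof. by case/andP=> _ /eqP SF yS yF; apply/set1P; rewrite -SF inE yS. Qed.

Lemma private_fort_memx S x F : private_fort e S x F -> x \in F.
Proof. by case/andP=> _ /eqP SF; have := set11 x; rewrite -SF inE => /andP[]. Qed.

Lemma fort_nbh_other F v u :
  fort e F -> v \notin F -> u \in nbh e v :&: F ->
  exists2 w, w != u & w \in nbh e v :&: F.
Proof.
case/andP=> _ /forallP/(_ v)/implyP fortF /fortF card_ne1 uNF.
have : 1 < #|nbh e v :&: F|.
  by rewrite ltn_neqAle eq_sym card_ne1 card_gt0; apply/set0Pn; exists u.
case/card_gt1P=> w1 [w2 [w1N w2N w12]].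
have [w1u | w1u] := eqVneq w1 u; last by exists w1.
by exists w2; rewrite // -w1u eq_sym.
Qed.

Lemma ZIr_setC_dominating S :
  irreflexive e -> no_isolated e -> ZIr_set e S -> dominating e (~: S).
Proof.
move=> irr_e noiso ZIrS; apply/forallP => x; rewrite inE.
have [xS | //] := boolP (x \in S); have [u xu] := noiso x.
have [uS | uNS] := boolP (u \in S); last first.
  by apply/existsP; exists u; rewrite inE uNS xu.
have /existsP[F privF] := forall_inP ZIrS u uS.
have xNF : x \notin F.
  by apply/negP => /(private_fort_mem privF xS) x_eq_u; rewrite x_eq_u irr_e in xu.
have uN : u \in nbh e x :&: F by rewrite !inE xu (private_fort_memx privF).
have [w wu] := fort_nbh_other (proj1 (andP privF)) xNF uN.
rewrite !inE => /andP[xw wF]; apply/existsP; exists w.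
rewrite inE xw andbT; apply/negP => wS.
by move/eqP: wu; apply; apply: private_fort_mem privF wS wF.
Qed.

Lemma setC_two_dominating_ZIr D : two_dominating e D -> ZIr_set e (~: D).
Proof.
move=> domD; apply/forall_inP => x; rewrite inE => xND.
apply/existsP; exists (x |: D); apply/andP; split.
  apply/andP; split; first by apply/set0Pn; exists x; rewrite !inE eqxx.
  apply/forallP => v; apply/implyP; rewrite !inE negb_or => /andP[vx vND].
  rewrite neq_ltn (leq_trans (implyP (forallP domD v) vND)) ?orbT //.
  by apply/subset_leq_card/setIS/subsetUr.
apply/eqP/setP => y; rewrite !inE.
by have [-> | yx] := eqVneq y x; [rewrite xND | case: (y \in D)].
Qed.

Lemma ZIR_ge : #|T| - two_domination_number e <= ZIR e.
Proof.
have [D domD <-] := two_domination_number_attained.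
have [S maxS DC_sub_S] := maxset_exists (setC_two_dominating_ZIr domD).
by rewrite -[D]setCK -cardsCs (leq_trans (subset_leq_card DC_sub_S)) // leq_bigmax_cond.
Qed.

Lemma ZIR_le :
  irreflexive e -> no_isolated e -> ZIR e <= #|T| - domination_number e.
Proof.
move=> irr_e noiso; apply/bigmax_leqP => S /maxsetp ZIrS.
have gamma_le := domination_number_le (ZIr_setC_dominating irr_e noiso ZIrS).
by rewrite -(cardsC S) -addnBA // leq_addr.
Qed.

Lemma ZIR_eq_bounds :
  irreflexive e -> no_isolated e -> two_domination_number e <= domination_number e ->
  ZIR e = #|T| - two_domination_number e /\ ZIR e = #|T| - domination_number e.
Proof.
move=> irr_e noiso gamma2_le_gamma.
have lo := ZIR_ge; have hi := ZIR_le irr_e noiso.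
have sub_le : #|T| - domination_number e <= #|T| - two_domination_number e
  by exact: leq_sub2l.
by split; apply/eqP; rewrite eqn_leq ?lo ?hi ?(leq_trans hi sub_le) ?(leq_trans sub_le lo).
Qed.

End Bounds.

(* The 4-cycle on bool * bool: two vertices are adjacent iff they differ in
   exactly one coordinate. *)
Definition C4 : rel (bool * bool) := fun x y => (x.1 != y.1) != (x.2 != y.2).

Lemma C4_simple : simple_graph C4.
Proof.
split; first by move=> [a b] [c d]; rewrite /C4 /= (eq_sym a) (eq_sym b).
by move=> [a b]; rewrite /C4 /= !eqxx.
Qed.

Lemma C4_no_isolated : no_isolated C4.
Proof. by move=> [a b]; exists (~~ a, b); rewrite /C4 /=; case: a; case: b. Qed.

Lemma card_C4 : #|{: bool * bool}| = 4.
Proof. by rewrite card_prod card_bool. Qed.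

Lemma C4_two_domination_number_le : two_domination_number C4 <= 2.
Proof.
pose D := [set (true, true); (false, false)].
have domD : two_dominating C4 D.
  apply/forallP => v; apply/implyP => vND.
  suff -> : nbh C4 v :&: D = D by rewrite cards2.
  apply/setIidPr/subsetP => u; move: vND; rewrite !inE.
  by case: v => [[] []]; case: u => [[] []].
by rewrite (leq_trans (two_domination_number_le domD)) // cards2.
Qed.

Lemma C4_dominating_card D : dominating C4 D -> 2 <= #|D|.
Proof.
move/forallP=> domD; rewrite ltnNge; apply/negP => /card_le1_eqP D_le1.
have [x xD] : exists x, x \in D.
  case/orP: (domD (true, true)) => [tD | /existsP[u /andP[uD _]]].
    by exists (true, true).
  by exists u.
pose y := (~~ x.1, ~~ x.2).
have [u uD yu] : exists2 u, u \in D & (u == y) || C4 y u.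
  case/orP: (domD y) => [yD | /existsP[u /andP[uD yu]]]; first by exists y; rewrite ?eqxx.
  by exists u; rewrite ?yu ?orbT.
by move: yu; rewrite (D_le1 x u xD uD) /y /C4; case: x {xD y} => [[] []].
Qed.

Lemma C4_domination_number_ge : 2 <= domination_number C4.
Proof.
by apply: domination_number_ge; [rewrite card_C4 | exact: C4_dominating_card].
Qed.

Lemma ZIR_C4 :
  ZIR C4 = 4 - two_domination_number C4 /\ ZIR C4 = 4 - domination_number C4.
Proof.
rewrite -card_C4; apply: ZIR_eq_bounds; first by case: C4_simple.
  exact: C4_no_isolated.
exact: leq_trans C4_two_domination_number_le C4_domination_number_ge.
Qed.

Theorem proposition4p1 :
  (forall (T : finType) (e : rel T),
      simple_graph e -> 2 <= #|T| -> no_isolated e ->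
      #|T| - two_domination_number e <= ZIR e <= #|T| - domination_number e)
  /\ (exists (T : finType) (e : rel T),
      [/\ simple_graph e, 2 <= #|T|, no_isolated e &
          ZIR e = #|T| - two_domination_number e])
  /\ (exists (T : finType) (e : rel T),
      [/\ simple_graph e, 2 <= #|T|, no_isolated e &
          ZIR e = #|T| - domination_number e]).
Proof.
split; first by move=> T e [_ irr_e] _ noiso; rewrite ZIR_ge ZIR_le.
have [sharp_lo sharp_hi] := ZIR_C4.
split; exists (bool * bool)%type, C4;
  by split; rewrite ?card_C4 //; [exact: C4_simple | exact: C4_no_isolated].
Qed.
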